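(* For every enhanced Gelfand--Zetlin pattern $P$ with top row $\lambda$, the cell $C_P$ is nonempty and homeomorphic to an open ball of dimension $\mathrm{rk}\,P$.
   Context: Let $\lambda=(\lambda_1\ge\dots\ge\lambda_n)$ be a partition. Coordinates $y_{ij}$ ($i,j\ge1$, $i+j\le n$) on $\mathbb{R}^{n(n-1)/2}$, with $y_{0j}=\lambda_{n+1-j}$; $GZ(\lambda)$ is defined by $y_{i-1,j}\le y_{ij}\le y_{i-1,j+1}$. A GZ pattern with top row $\lambda$ is an integer array $a_{ij}$, $0\le i\le n-1$, $1\le j\le n-i$, with $a_{0j}=\lambda_{n+1-j}$ and $a_{i-1,j}\le a_{ij}\le a_{i-1,j+1}$. An enhanced GZ pattern is such an array with encircled entries and edges (each joining $a_{ij}$, $i\ge1$, with $a_{i-1,j}$ or $a_{i-1,j+1}$) such that: (1) row $0$ entries are encircled; (2) joined entries are equal, the lower one encircled; (3) for $i\ge1$: both $a_{ij},a_{i,j+1}$ are joined to $a_{i-1,j+1}$ iff both are joined to $a_{i+1,j}$; (4) if $a_{0j}=a_{0,j+1}$ then $a_{1j}$ is encircled and joined to both; (5) if $a_{i-1,j}<a_{i-1,j+1}$ and $a_{ij}=a_{i-1,j}$, then $a_{ij}$ is encircled and joined to $a_{i-1,j}$; (6) if $a_{i-1,j}<a_{i-1,j+1}$, $a_{ij}=a_{i-1,j+1}$, $a_{ij}$ encircled, then joined to $a_{i-1,j+1}$; (7) if $a_{i-1,j}=a_{i-1,j+1}=a_{ij}$ and the two upper entries are connected by a path of edges, then $a_{ij}$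 is encircled and joined to both; (8) if $a_{i-1,j}=a_{i-1,j+1}=a_{ij}$ and $a_{ij}$ is encircled, it is joined to at least one of them. The rank $\mathrm{rk}\,P$ is the number of non-encircled entries. Cell $C_P$: for each $i\ge1$ impose: if $a_{ij}$ is joined to $a_{i-1,j}$ (resp. $a_{i-1,j+1}$), then $y_{ij}=y_{i-1,j}$ (resp. $y_{ij}=y_{i-1,j+1}$); if no edge goes up from $a_{ij}$ and it is encircled, $y_{ij}=a_{ij}$; if no edge goes up and it is not encircled, impose $a_{ij}-1<y_{ij}$ if $a_{ij}-a_{i-1,j}\ge2$, else $y_{i-1,j}<y_{ij}$, and $y_{ij}<y_{i-1,j+1}$ if $a_{i-1,j+1}=a_{ij}$, else $y_{ij}<a_{ij}$. Let $\widehat{C_P}$ be the set so defined, $L$ its affine span, and $C_P=\widehat{C_P}\cap(GZ(\lambda)\cap L)^0$, where $(\cdot)^0$ is the relative interior in $L$. *)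

From HB Require Import structures.
From mathcomp Require Import all_boot all_order all_algebra.
From mathcomp Require Import all_classical all_reals all_analysis.

Set Implicit Arguments.
Unset Strict Implicit.
Unset Printing Implicit Defensive.

Import Order.TTheory GRing.Theory Num.Theory.
Import numFieldNormedType.Exports.
Local Open Scope classical_set_scope.
Local Open Scope ring_scope.

(* A partition lambda = (lambda_1 >= ... >= lambda_n) is a function    *)
(* lam : nat -> nat, used on indices 1..n.                             *)

Definition is_partition (n : nat) (lam : nat -> nat) : Prop :=
  forall k : nat, (1 <= k)%N -> (k < n)%N -> (lam k.+1 <= lam k)%N.

Definition gz_dom (n i j : nat) : bool :=
  [&& (i < n)%N, (1 <= j)%N & (j <= n - i)%N].

(* An enhanced GZ pattern datum: entries a i j, encircling enc i j,
   edge jl i j joining a_{ij} to a_{i-1,j} and edge jr i j joining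
   a_{ij} to a_{i-1,j+1} (only meaningful for i >= 1 on gz_dom). *)
Record egz_data := EGZ {
  egz_a  : nat -> nat -> int;
  egz_enc : nat -> nat -> bool;
  egz_jl : nat -> nat -> bool;
  egz_jr : nat -> nat -> bool }.

Definition is_GZ_pattern (n : nat) (lam : nat -> nat) (a : nat -> nat -> int)
  : Prop :=
  (forall j, gz_dom n 0 j -> a 0%N j = (lam (n.+1 - j)%N)%:Z) /\
  (forall i j, (1 <= i)%N -> gz_dom n i j ->
     a i.-1 j <= a i j /\ a i j <= a i.-1 j.+1).

Definition egz_adj (n : nat) (P : egz_data) (p q : nat * nat) : Prop :=
  exists i j, [/\ (1 <= i)%N, gz_dom n i j &
    ((egz_jl P i j /\ ((p = (i, j) /\ q = (i.-1, j)) \/ (q = (i, j) /\ p = (i.-1, j))))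
  \/ (egz_jr P i j /\ ((p = (i, j) /\ q = (i.-1, j.+1)) \/ (q = (i, j) /\ p = (i.-1, j.+1)))))].

Inductive egz_path (n : nat) (P : egz_data) : nat * nat -> nat * nat -> Prop :=
| egz_path_refl p : egz_path n P p p
| egz_path_step p q r : egz_adj n P p q -> egz_path n P q r -> egz_path n P p r.

Definition is_enhanced_GZ (n : nat) (lam : nat -> nat) (P : egz_data) : Prop :=
  let a := egz_a P in let enc := egz_enc P in
  let jl := egz_jl P in let jr := egz_jr P in
  is_GZ_pattern n lam a /\
  (* (1) *)
  (forall j, gz_dom n 0 j -> enc 0%N j) /\
  (* (2) *)
  (forall i j, (1 <= i)%N -> gz_dom n i j ->
     (jl i j -> a i j = a i.-1 j /\ enc i j) /\
     (jr i j -> a i j = a i.-1 j.+1 /\ enc i j)) /\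
  (* (3) *)
  (forall i j, (1 <= i)%N -> gz_dom n i j -> gz_dom n i j.+1 ->
     ((jr i j /\ jl i j.+1) <-> (jl i.+1 j /\ jr i.+1 j))) /\
  (* (4) *)
  (forall j, gz_dom n 0 j -> gz_dom n 0 j.+1 -> a 0%N j = a 0%N j.+1 ->
     [/\ enc 1%N j, jl 1%N j & jr 1%N j]) /\
  (* (5) *)
  (forall i j, (1 <= i)%N -> gz_dom n i j ->
     a i.-1 j < a i.-1 j.+1 -> a i j = a i.-1 j -> enc i j /\ jl i j) /\
  (* (6) *)
  (forall i j, (1 <= i)%N -> gz_dom n i j ->
     a i.-1 j < a i.-1 j.+1 -> a i j = a i.-1 j.+1 -> enc i j -> jr i j) /\
  (* (7) *)
  (forall i j, (1 <= i)%N -> gz_dom n i j ->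
     a i.-1 j = a i.-1 j.+1 -> a i j = a i.-1 j ->
     egz_path n P (i.-1, j) (i.-1, j.+1) -> [/\ enc i j, jl i j & jr i j]) /\
  (* (8) *)
  (forall i j, (1 <= i)%N -> gz_dom n i j ->
     a i.-1 j = a i.-1 j.+1 -> a i j = a i.-1 j -> enc i j -> jl i j \/ jr i j).

Definition egz_rank (n : nat) (P : egz_data) : nat :=
  (\sum_(i < n) \sum_(1 <= j < (n - i).+1) (~~ egz_enc P i j : nat))%N.

Definition idxb (n : nat) (p : nat * nat) : bool :=
  [&& (1 <= p.1)%N, (1 <= p.2)%N & (p.1 + p.2 <= n)%N].

Definition Idx (n : nat) := {p : nat * nat | idxb n p}.

Notation GZspace R n := {ptws Idx n -> R}.

(* y_{ij}, extended by y_{0j} = lambda_{n+1-j} (and 0 off the index set) *)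
Definition ycoord (R : realType) (n : nat) (lam : nat -> nat)
  (y : GZspace R n) (i j : nat) : R :=
  if i == 0%N then (lam (n.+1 - j)%N)%:R
  else match @insub _ (idxb n) (Idx n) (i, j) with
       | Some k => y k | None => 0 end.

Definition GZpoly (R : realType) (n : nat) (lam : nat -> nat) : set (GZspace R n) :=
  [set y | forall i j, (1 <= i)%N -> (1 <= j)%N -> (i + j <= n)%N ->
     ycoord lam y i.-1 j <= ycoord lam y i j /\
     ycoord lam y i j <= ycoord lam y i.-1 j.+1].

Definition hatC (R : realType) (n : nat) (lam : nat -> nat) (P : egz_data)
  : set (GZspace R n) :=
  let a := egz_a P in let enc := egz_enc P in
  let jl := egz_jl P in let jr := egz_jr P in
  [set y | forall i j, (1 <= i)%N -> gz_dom n i j ->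
     let Y := ycoord lam y in
     (jl i j -> Y i j = Y i.-1 j) /\
     (jr i j -> Y i j = Y i.-1 j.+1) /\
     (~~ jl i j -> ~~ jr i j -> enc i j -> Y i j = (a i j)%:~R) /\
     (~~ jl i j -> ~~ jr i j -> ~~ enc i j ->
        (if (2%:Z <= a i j - a i.-1 j) then (a i j)%:~R - 1 < Y i j
         else Y i.-1 j < Y i j) /\
        (if a i.-1 j.+1 == a i j then Y i j < Y i.-1 j.+1
         else Y i j < (a i j)%:~R))].

Definition affine_span (R : realType) (I : Type) (S : set {ptws I -> R})
  : set {ptws I -> R} :=
  [set y | exists (m : nat) (x : 'I_m -> {ptws I -> R}) (c : 'I_m -> R),
     [/\ forall k, S (x k), \sum_(k < m) c k = 1 &
         forall t : I, y t = \sum_(k < m) c k * x k t]].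

Definition rel_interior (T : topologicalType) (L K : set T) : set T :=
  [set x | K x /\ exists U : set T, [/\ open U, U x & U `&` L `<=` K]].

Definition cell (R : realType) (n : nat) (lam : nat -> nat) (P : egz_data)
  : set (GZspace R n) :=
  let C : set (GZspace R n) := @hatC R n lam P in
  let L : set (GZspace R n) := @affine_span R (Idx n) C in
  C `&` @rel_interior (GZspace R n) L (@GZpoly R n lam `&` L).

Definition homeomorphic (X Y : topologicalType) (A : set X) (B : set Y) : Prop :=
  exists (f : X -> Y) (g : Y -> X),
    [/\ (forall x, A x -> B (f x)), (forall y, B y -> A (g y)),
        (forall x, A x -> g (f x) = x), (forall y, B y -> f (g y) = y)
      & {within A, continuous f} /\ {within B, continuous g}].

Definition open_ball (R : realType) (d : nat) : set {ptws 'I_d -> R} :=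
  [set v | \sum_(k < d) v k ^+ 2 < 1].

From HB Require Import structures.
From mathcomp Require Import all_boot all_order all_algebra.
From mathcomp Require Import all_classical all_reals all_analysis.
From mathcomp Require Import ring lra zify.

Set Implicit Arguments.
Unset Strict Implicit.
Unset Printing Implicit Defensive.
Import Order.TTheory GRing.Theory Num.Theory.
Import numFieldNormedType.Exports.
Local Open Scope classical_set_scope.
Local Open Scope ring_scope.

(* Non-encircled entries are free: every other coordinate of a point of
   \hat C_P either copies the entry it is joined to upwards or is the constant
   a_ij, so \hat C_P is the graph of an affine map over the free coordinates.
   Over them, C_P becomes an open polyhedron, cut out by the strict
   inequalities of \hat C_P and by the interlacing inequalities that are strict
   at one explicit base point (entries a_ij - slack_ij with 0 <= slack_ij < 1);
   relative interiority makes the latter strict on all of C_P.  An open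
   polyhedron is star-shaped around any of its points with a continuous gauge,
   hence homeomorphic to R^rk and to the open ball. *)

(* Continuity is required at every point of [A] in the ambient space: this is
   stronger than continuity on the subspace and composes without any subspace
   bookkeeping. *)
Definition ambient_homeomorphic (X Y : topologicalType) (A : set X) (B : set Y) :=
  exists (f : X -> Y) (g : Y -> X),
   [/\ (forall x, A x -> B (f x)), (forall y, B y -> A (g y)),
       (forall x, A x -> g (f x) = x), (forall y, B y -> f (g y) = y) &
       (forall x, A x -> {for x, continuous f}) /\
       (forall y, B y -> {for y, continuous g})].

Lemma ambient_homeomorphicW (X Y : topologicalType) (A : set X) (B : set Y) :
  ambient_homeomorphic A B -> homeomorphic A B.
Proof.
move=> [f [g [? ? ? ? [cf cg]]]]; exists f, g; split => //; split;
  apply: continuous_in_subspaceT => x; rewrite in_setE => Ax; [exact: cf|exact: cg].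
Qed.

Lemma ambient_homeomorphic_trans (X Y Z : topologicalType)
    (A : set X) (B : set Y) (C : set Z) :
  ambient_homeomorphic A B -> ambient_homeomorphic B C -> ambient_homeomorphic A C.
Proof.
move=> [f [g [fA gB gf fg [cf cg]]]] [f' [g' [fB gC gf' fg' [cf' cg']]]].
exists (f' \o f), (g \o g'); split => /=.
- by move=> x /fA /fB.
- by move=> y /gC /gB.
- by move=> x Ax; rewrite gf' ?gf //; exact: fA.
- by move=> y Cy; rewrite fg ?fg' //; exact: gC.
split.
- by move=> x Ax; apply: continuous_comp; [exact: cf|apply: cf'; exact: fA].
- by move=> y Cy; apply: continuous_comp; [exact: cg'|apply: cg; exact: gC].
Qed.

Lemma continuous_ptws (T : topologicalType) (I : Type) (V : topologicalType)
    (h : T -> {ptws I -> V}) (x : T) :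
  (forall i, {for x, continuous (fun t => h t i)}) -> {for x, continuous h}.
Proof.
move=> hc; apply/cvg_sup => i A; rewrite nbhsE => -[_ [[B oB <-] Bhx] BA].
apply: (filterS BA); apply: hc; exact: open_nbhs_nbhs.
Qed.

Section RealContinuity.
Context {R : realType}.

Lemma continuous_coord {I : eqType} (i : I) :
  continuous (fun g : {ptws I -> R} => g i).
Proof. exact: (@proj_continuous I (fun _ => R) i). Qed.

(* Stated for the lambda terms themselves (rather than [f + g], ...) so that
   they apply by unification to goals of this shape. *)
Section PointwiseOperations.
Context {T : topologicalType} {f g : T -> R} {x : T}.
Hypotheses (fc : {for x, continuous f}) (gc : {for x, continuous g}).

Lemma continuous_add : {for x, continuous (fun t : T => f t + g t : R)}.
Proof. exact: (@cvgD R R^o T (nbhs x) _ f g _ _ fc gc). Qed.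

Lemma continuous_sub : {for x, continuous (fun t : T => f t - g t : R)}.
Proof. exact: (@cvgB R R^o T (nbhs x) _ f g _ _ fc gc). Qed.

Lemma continuous_mul : {for x, continuous (fun t : T => f t * g t : R)}.
Proof. exact: (@cvgM R T (nbhs x) _ f g _ _ fc gc). Qed.

Lemma continuous_inv : f x != 0 -> {for x, continuous (fun t : T => (f t)^-1 : R)}.
Proof. by move=> fx0; exact: (@cvgV R T (nbhs x) _ f _ fx0 fc). Qed.

Lemma continuous_sqrt : {for x, continuous (fun t : T => Num.sqrt (f t) : R)}.
Proof. exact: (continuous_comp fc (@sqrt_continuous R (f x))). Qed.

End PointwiseOperations.

Lemma continuous_bigmaxr (T : topologicalType) (K : finType) (F : K -> T -> R)
    (x : T) :
  (forall k, {for x, continuous (F k)}) ->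
  {for x, continuous (fun t => \big[Num.max/0]_k F k t)}.
Proof.
move=> Fc; apply: cvg_big => [z|k _]; last exact: Fc.
exact: (@continuous_max _ _ fst snd z cvg_fst cvg_snd).
Qed.

Lemma open_strict_ineqs (T : topologicalType) (K : finType) (P : pred K)
    (f g : K -> T -> R) :
  (forall k, continuous (f k)) -> (forall k, continuous (g k)) ->
  open [set x | forall k, P k -> f k x < g k x].
Proof.
move=> fc gc; rewrite openE => x hx; apply: filter_forall => k.
have [Pk|_] := boolP (P k); last by apply: nearW.
have gf_cont : continuous (fun t => g k t - f k t).
  by move=> t; apply: continuous_sub; [exact: gc|exact: fc].
have : nbhs x ((fun t => g k t - f k t) @^-1` [set r | 0 < r]).
  apply: open_nbhs_nbhs; split; last by rewrite /= subr_gt0; exact: hx.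
  exact: (continuousP _).1 gf_cont _ (@open_gt R 0).
by apply: filterS => t /=; rewrite subr_gt0.
Qed.

End RealContinuity.

Section UnitBall.
Context {R : realType} (D : finType).

Definition sqnorm (v : {ptws D -> R}) : R := \sum_k v k ^+ 2.

Definition unit_ball : set {ptws D -> R} := [set v | sqnorm v < 1].

Lemma sqnorm_ge0 v : 0 <= sqnorm v.
Proof. by apply: sumr_ge0 => k _; exact: sqr_ge0. Qed.

Lemma sqnormZ (v : {ptws D -> R}) (c : R) :
  sqnorm (fun k => v k * c) = sqnorm v * c ^+ 2.
Proof. by rewrite /sqnorm mulr_suml; apply: eq_bigr => k _; rewrite exprMn. Qed.

Lemma continuous_sqnorm : continuous sqnorm.
Proof.
apply: continuous_big => [|k _ v]; first exact: add_continuous.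
apply: (@continuous_comp _ _ _ (fun g : {ptws D -> R} => g k) (fun r : R => r ^+ 2)).
  exact: continuous_coord.
exact: exprn_continuous.
Qed.

Definition to_ball (w : {ptws D -> R}) : {ptws D -> R} :=
  fun k => w k * (Num.sqrt (1 + sqnorm w))^-1.

Definition from_ball (v : {ptws D -> R}) : {ptws D -> R} :=
  fun k => v k * (Num.sqrt (1 - sqnorm v))^-1.

Lemma sqnorm_to_ball w : sqnorm (to_ball w) = sqnorm w / (1 + sqnorm w).
Proof. by rewrite sqnormZ exprVn sqr_sqrtr // addr_ge0 // sqnorm_ge0. Qed.

Lemma sqnorm_from_ball v : unit_ball v ->
  sqnorm (from_ball v) = sqnorm v / (1 - sqnorm v).
Proof. by move=> vB; rewrite sqnormZ exprVn sqr_sqrtr // subr_ge0 ltW. Qed.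

Lemma to_ballK : cancel to_ball from_ball.
Proof.
move=> w; apply: funext => k; rewrite /from_ball sqnorm_to_ball.
have s0 := sqnorm_ge0 w; have p0 : 0 < 1 + sqnorm w by rewrite ltr_wpDr.
have -> : 1 - sqnorm w / (1 + sqnorm w) = (1 + sqnorm w)^-1.
  by field; rewrite gt_eqF.
by rewrite sqrtrV ?invr_ge0 ?ltW // invrK -mulrA mulVf ?mulr1 // gt_eqF ?sqrtr_gt0.
Qed.

Lemma from_ballK : {in unit_ball, cancel from_ball to_ball}.
Proof.
move=> v; rewrite inE => vB; apply: funext => k.
rewrite /to_ball sqnorm_from_ball //.
have p0 : 0 < 1 - sqnorm v by rewrite subr_gt0.
have -> : 1 + sqnorm v / (1 - sqnorm v) = (1 - sqnorm v)^-1.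
  by field; rewrite gt_eqF.
by rewrite sqrtrV ?invr_ge0 ?ltW // invrK -mulrA mulVf ?mulr1 // gt_eqF ?sqrtr_gt0.
Qed.

Lemma ptws_homeomorphic_unit_ball :
  ambient_homeomorphic [set: {ptws D -> R}] unit_ball.
Proof.
exists to_ball, from_ball; split => //.
- move=> w _; rewrite /unit_ball /= sqnorm_to_ball ltr_pdivrMr ?mul1r ?ltrDr //.
  by rewrite ltr_wpDr // sqnorm_ge0.
- by move=> w _; exact: to_ballK.
- by move=> v vB; apply: from_ballK; rewrite inE.
split => [w _|v vB]; apply: continuous_ptws => k;
  apply: continuous_mul; try exact: continuous_coord.
- apply: continuous_inv.
    apply: continuous_sqrt; apply: continuous_add; first exact: cst_continuous.
    exact: continuous_sqnorm.
  by rewrite gt_eqF // sqrtr_gt0 ltr_wpDr // sqnorm_ge0.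
- apply: continuous_inv.
    apply: continuous_sqrt; apply: continuous_sub; first exact: cst_continuous.
    exact: continuous_sqnorm.
  by rewrite gt_eqF // sqrtr_gt0 subr_gt0.
Qed.

Lemma unit_ball_homeomorphic_open_ball :
  ambient_homeomorphic unit_ball (@open_ball R #|D|).
Proof.
have sqnormE (v : {ptws D -> R}) : sqnorm v = \sum_(k < #|D|) v (enum_val k) ^+ 2.
  rewrite /sqnorm (reindex (@enum_val D (mem D))) //=.
  by exists enum_rank => [k _|d _]; [exact: enum_valK | exact: enum_rankK].
exists (fun v : {ptws D -> R} => (fun k => v (enum_val k)) : {ptws 'I_#|D| -> R}),
  (fun w : {ptws 'I_#|D| -> R} => (fun d => w (enum_rank d)) : {ptws D -> R}).
split.
- by move=> v; rewrite /unit_ball /= sqnormE.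
- move=> w; rewrite /unit_ball /= sqnormE /=.
  by under eq_bigr => k _ do rewrite enum_valK.
- by move=> v _; apply: funext => d; rewrite enum_rankK.
- by move=> w _; apply: funext => k; rewrite enum_valK.
- by split => [v _|w _]; apply: continuous_ptws => k; exact: continuous_coord.
Qed.

End UnitBall.

Section OpenPolyhedron.
Context {R : realType} (D K : finType) (f : K -> {ptws D -> R} -> R)
  (z0 : {ptws D -> R}).
Hypothesis f_cont : forall k, continuous (f k).
Hypothesis f_affine : forall k (x y : {ptws D -> R}) (t : R),
  f k (fun d => x d + t * (y d - x d)) = f k x + t * (f k y - f k x).
Hypothesis f_z0_gt0 : forall k, 0 < f k z0.

Definition open_polyhedron : set {ptws D -> R} := [set z | forall k, 0 < f k z].

Let shift (v : {ptws D -> R}) : {ptws D -> R} := fun d => z0 d + v d.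
Let unshift (z : {ptws D -> R}) : {ptws D -> R} := fun d => z d - z0 d.
Let scale (t : R) (v : {ptws D -> R}) : {ptws D -> R} := fun d => t * v d.

Let unshiftK : cancel unshift shift.
Proof. by move=> z; apply: funext => d; rewrite /shift /unshift; ring. Qed.

Let shiftK : cancel shift unshift.
Proof. by move=> v; apply: funext => d; rewrite /shift /unshift; ring. Qed.

(* [gauge] is the Minkowski functional of the polyhedron seen from [z0]. *)
Let facet_gauge k v := 1 - f k (shift v) / f k z0.
Let gauge v := \big[Num.max/0]_k facet_gauge k v.

Let facet_gaugeZ k v t : facet_gauge k (scale t v) = t * facet_gauge k v.
Proof.
have := f_affine k z0 (shift v) t; rewrite /facet_gauge.
have -> : (fun d => z0 d + t * (shift v d - z0 d)) = shift (scale t v).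
  by apply: funext => d; rewrite /shift /scale; ring.
by move=> ->; field; rewrite gt_eqF.
Qed.

Let gaugeZ v t : 0 <= t -> gauge (scale t v) = t * gauge v.
Proof.
move=> t0; rewrite /gauge.
rewrite (big_morph (fun x => t * x) (fun a b => maxr_pMr a b t0) (mulr0 t)).
by apply: eq_bigr => k _; exact: facet_gaugeZ.
Qed.

Let gauge_ge0 v : 0 <= gauge v.
Proof. exact: bigmax_ge_id. Qed.

Let gauge_lt1 v : gauge v < 1 <-> open_polyhedron (shift v).
Proof.
have facet_lt1 k : facet_gauge k v < 1 <-> 0 < f k (shift v).
  by rewrite /facet_gauge gtrBl pmulr_lgt0 ?invr_gt0.
split => [/bigmax_ltP [_ lt1] k|sv]; first exact/facet_lt1/lt1.
by apply/bigmax_ltP; split => [|k _]; [exact: ltr01 | exact/facet_lt1/sv].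
Qed.

Let continuous_gauge (T : topologicalType) (p : T -> {ptws D -> R}) x :
  {for x, continuous p} -> {for x, continuous (fun t => gauge (p t))}.
Proof.
move=> pc; apply: continuous_bigmaxr => k.
apply: continuous_sub; first exact: cst_continuous.
apply: continuous_mul; last exact: cst_continuous.
have shift_cont : {for x, continuous (fun t => shift (p t))}.
  apply: continuous_ptws => d; apply: continuous_add; first exact: cst_continuous.
  exact: continuous_comp pc (@continuous_coord _ _ d (p x)).
exact (continuous_comp shift_cont (@f_cont k (shift (p x)))).
Qed.

Let to_ptws z := scale (1 - gauge (unshift z))^-1 (unshift z).
Let from_ptws w := shift (scale (1 + gauge w)^-1 w).

Let from_ptws_in w : open_polyhedron (from_ptws w).
Proof.
apply/gauge_lt1; have g0 := gauge_ge0 w.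
by rewrite gaugeZ ?invr_ge0 ?addr_ge0 // mulrC ltr_pdivrMr; lra.
Qed.

Let to_ptwsK z : open_polyhedron z -> from_ptws (to_ptws z) = z.
Proof.
rewrite -{1}[z]unshiftK => /gauge_lt1 g1; have g0 := gauge_ge0 (unshift z).
rewrite /from_ptws /to_ptws gaugeZ ?invr_ge0 ?subr_ge0 ?ltW //.
have -> : 1 + (1 - gauge (unshift z))^-1 * gauge (unshift z) =
          (1 - gauge (unshift z))^-1 by field; rewrite gt_eqF ?subr_gt0.
rewrite invrK -[RHS]unshiftK; congr shift; apply: funext => d.
by rewrite /scale mulrA mulfV ?mul1r // gt_eqF ?subr_gt0.
Qed.

Let from_ptwsK : cancel from_ptws to_ptws.
Proof.
move=> w; have g0 := gauge_ge0 w.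
rewrite /from_ptws /to_ptws shiftK gaugeZ ?invr_ge0 ?addr_ge0 //.
have -> : 1 - (1 + gauge w)^-1 * gauge w = (1 + gauge w)^-1.
  by field; rewrite gt_eqF // ltr_wpDr.
apply: funext => d; rewrite invrK /scale mulrA mulfV ?mul1r //.
by rewrite gt_eqF // ltr_wpDr.
Qed.

Let continuous_to_ptws z : open_polyhedron z -> {for z, continuous to_ptws}.
Proof.
rewrite -{1}[z]unshiftK => /gauge_lt1 g1.
have unshift_cont : {for z, continuous unshift}.
  apply: continuous_ptws => d; apply: continuous_sub; first exact: continuous_coord.
  exact: cst_continuous.
apply: continuous_ptws => d; apply: continuous_mul; last first.
  exact: continuous_comp unshift_cont (@continuous_coord _ _ d _).
apply: continuous_inv; last by rewrite gt_eqF // subr_gt0.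
apply: continuous_sub; first exact: cst_continuous.
exact: continuous_gauge.
Qed.

Let continuous_from_ptws w : {for w, continuous from_ptws}.
Proof.
apply: continuous_ptws => d; apply: continuous_add; first exact: cst_continuous.
apply: continuous_mul; last exact: continuous_coord.
apply: continuous_inv; last by rewrite gt_eqF // ltr_wpDr.
apply: continuous_add; first exact: cst_continuous.
by apply: continuous_gauge => y.
Qed.

Theorem open_polyhedron_homeomorphic_ptws :
  ambient_homeomorphic open_polyhedron [set: {ptws D -> R}].
Proof.
exists to_ptws, from_ptws; split; first by [].
- by move=> w _; exact: from_ptws_in.
- exact: to_ptwsK.
- by move=> w _; exact: from_ptwsK.
- by split => [z|w _]; [exact: continuous_to_ptws | exact: continuous_from_ptws].
Qed.

End OpenPolyhedron.

Section AffineSpan.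
Context {R : realType} {I : Type}.
Implicit Types (S K : set {ptws I -> R}) (x y : {ptws I -> R}).

Lemma affine_span_self S : S `<=` affine_span S.
Proof.
move=> y Sy; exists 1%N, (fun _ => y), (fun _ => 1).
by split => [//||t]; rewrite big_ord1 ?mul1r.
Qed.

Lemma affine_span_line S x y t :
  S x -> S y -> affine_span S (fun i => (1 + t) * y i - t * x i).
Proof.
move=> Sx Sy; exists 2%N, (fun k : 'I_2 => if k == ord0 then y else x),
  (fun k : 'I_2 => if k == ord0 then 1 + t else - t).
split => [k||i]; first by case: (k == ord0).
- by rewrite big_ord_recl big_ord1 /=; ring.
- by rewrite big_ord_recl big_ord1 /=; ring.
Qed.

(* Going from [x] through [y] and slightly beyond stays in the affine span and,
   by relative interiority, in [K]. *)
Lemma rel_interior_affine_span_lt S K (phi : {ptws I -> R} -> R) x y :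
  (forall u v t, phi (fun i => (1 + t) * u i - t * v i) = (1 + t) * phi u - t * phi v) ->
  (forall w, K w -> phi w <= 0) -> S x -> S y -> phi x < 0 ->
  rel_interior (affine_span S) (K `&` affine_span S) y -> phi y < 0.
Proof.
move=> phi_affine phiK Sx Sy phix [_ [U [oU Uy UL]]].
rewrite ltNge; apply/negP => phiy.
pose yt (t : R) : {ptws I -> R} := fun i => (1 + t) * y i - t * x i.
have yt_cont : {for 0, continuous yt}.
  apply: continuous_ptws => i; apply: continuous_sub; apply: continuous_mul;
    try exact: cst_continuous; last exact: cvg_id.
  by apply: continuous_add; [exact: cst_continuous | exact: cvg_id].
have yt0 : yt 0 = y by apply: funext => i; rewrite /yt; ring.
have /yt_cont /nbhs_ballP [e /= e_gt0 eU] : nbhs (yt 0) U.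
  by rewrite yt0; apply: open_nbhs_nbhs.
have /eU Ue : ball (0 : R) e (e / 2).
  by rewrite -ball_normE /ball_ /= sub0r normrN gtr0_norm; lra.
have [/phiK + _] := UL _ (conj Ue (affine_span_line (e / 2) Sx Sy)).
by rewrite phi_affine; nra.
Qed.

End AffineSpan.

Lemma intr_ltD1 (R : numDomainType) (x y : int) : x < y -> x%:~R + 1 <= (y%:~R : R).
Proof. by rewrite -lezD1 -(ler_int R) intrD. Qed.

Section EnhancedPattern.
Context {R : realType} (n : nat) (lam : nat -> nat) (P : egz_data).
Hypothesis HP : is_enhanced_GZ n lam P.

Local Notation a := (egz_a P).
Local Notation enc := (egz_enc P).
Local Notation jl := (egz_jl P).
Local Notation jr := (egz_jr P).

Let top_row j : gz_dom n 0 j -> a 0%N j = (lam (n.+1 - j)%N)%:Z := HP.1.1 j.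
Let interlacing i j : (1 <= i)%N -> gz_dom n i j ->
  a i.-1 j <= a i j /\ a i j <= a i.-1 j.+1 := HP.1.2 i j.
Let top_row_encircled : forall j, gz_dom n 0 j -> enc 0%N j := HP.2.1.
Let edge_equal : forall i j, (1 <= i)%N -> gz_dom n i j ->
  (jl i j -> a i j = a i.-1 j /\ enc i j) /\
  (jr i j -> a i j = a i.-1 j.+1 /\ enc i j) := HP.2.2.1.
Let double_edge_below : forall i j, (1 <= i)%N -> gz_dom n i j -> gz_dom n i j.+1 ->
  (jr i j /\ jl i j.+1) <-> (jl i.+1 j /\ jr i.+1 j) := HP.2.2.2.1.
Let equal_top_double_edge : forall j, gz_dom n 0 j -> gz_dom n 0 j.+1 ->
  a 0%N j = a 0%N j.+1 -> [/\ enc 1%N j, jl 1%N j & jr 1%N j] := HP.2.2.2.2.1.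
Let left_tight_edge : forall i j, (1 <= i)%N -> gz_dom n i j ->
  a i.-1 j < a i.-1 j.+1 -> a i j = a i.-1 j -> enc i j /\ jl i j :=
  HP.2.2.2.2.2.1.
Let right_tight_edge : forall i j, (1 <= i)%N -> gz_dom n i j ->
  a i.-1 j < a i.-1 j.+1 -> a i j = a i.-1 j.+1 -> enc i j -> jr i j :=
  HP.2.2.2.2.2.2.1.
Let connected_double_edge : forall i j, (1 <= i)%N -> gz_dom n i j ->
  a i.-1 j = a i.-1 j.+1 -> a i j = a i.-1 j ->
  egz_path n P (i.-1, j) (i.-1, j.+1) -> [/\ enc i j, jl i j & jr i j] :=
  HP.2.2.2.2.2.2.2.1.
Let encircled_has_edge : forall i j, (1 <= i)%N -> gz_dom n i j ->
  a i.-1 j = a i.-1 j.+1 -> a i j = a i.-1 j -> enc i j -> jl i j \/ jr i j :=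
  HP.2.2.2.2.2.2.2.2.

Lemma gz_dom_up i j : (1 <= i)%N -> gz_dom n i j ->
  gz_dom n i.-1 j /\ gz_dom n i.-1 j.+1.
Proof. by move=> i1 /and3P[? ? ?]; split; apply/and3P; split; lia. Qed.

Lemma gz_dom_ord i j : gz_dom n i j ->
  exists i' j' : 'I_n.+1, (i' : nat) = i /\ (j' : nat) = j.
Proof.
case/and3P => ? ? ?; have hi : (i < n.+1)%N by lia.
have hj : (j < n.+1)%N by lia.
by exists (Ordinal hi), (Ordinal hj).
Qed.

(** * Free coordinates *)

Definition free_pos i j := [&& (1 <= i)%N, gz_dom n i j & ~~ enc i j].

Definition free_index := {p : 'I_n.+1 * 'I_n.+1 | free_pos p.1 p.2}.

Definition free_coord (z : {ptws free_index -> R}) i j : R :=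
  if (insub (inord i, inord j) : option free_index) is Some p then z p else 0.

Lemma free_coordP z i j : free_pos i j -> exists p : free_index,
  [/\ free_coord z i j = z p, (val p).1 = i :> nat & (val p).2 = j :> nat].
Proof.
move=> /[dup] fij /and3P[_ /and3P[? ? ?] _].
have ei : ((inord i : 'I_n.+1) : nat) = i by rewrite inordK //; lia.
have ej : ((inord j : 'I_n.+1) : nat) = j by rewrite inordK //; lia.
rewrite /free_coord; case: insubP => [p _ vp|]; last by rewrite /= ei ej fij.
by exists p; rewrite vp /= ei ej.
Qed.

Lemma free_coord_val z (p : free_index) : free_coord z (val p).1 (val p).2 = z p.
Proof.
by rewrite /free_coord !inord_val -surjective_pairing valK.
Qed.

(* An entry joined to both parents copies the left one; by (3) they agree. *)
Fixpoint extend (z : {ptws free_index -> R}) i j {struct i} : R :=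
  if i is i'.+1 then
    if enc i j then
      if jl i j then extend z i' j
      else if jr i j then extend z i' j.+1 else (a i j)%:~R
    else free_coord z i j
  else (lam (n.+1 - j)%N)%:R.

Lemma extendS z i j : extend z i.+1 j =
  if enc i.+1 j then
    if jl i.+1 j then extend z i j
    else if jr i.+1 j then extend z i j.+1 else (a i.+1 j)%:~R
  else free_coord z i.+1 j.
Proof. by []. Qed.

Definition embed (z : {ptws free_index -> R}) : {ptws Idx n -> R} :=
  fun k => extend z (val k).1 (val k).2.

Definition restrict (y : {ptws Idx n -> R}) : {ptws free_index -> R} :=
  fun p => ycoord lam y (val p).1 (val p).2.

Lemma ycoord_Idx (y : {ptws Idx n -> R}) (k : Idx n) :
  ycoord lam y (val k).1 (val k).2 = y k.
Proof.
rewrite /ycoord; case: k => [[i j] /= h]; have /and3P[i1 _ _] := h.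
have -> : (i == 0%N) = false by case: i i1 {h}.
by rewrite -[(i, j)]/(val (exist _ (i, j) h : Idx n)) valK.
Qed.

Lemma ycoord_embed z i j : gz_dom n i j -> ycoord lam (embed z) i j = extend z i j.
Proof.
rewrite /ycoord; case: i => [//|i] /and3P[? ? ?] /=.
case: insubP => [k _ vk|]; first by rewrite /embed vk.
by move/negP; case; rewrite /idxb /=; lia.
Qed.

Lemma extend_double_edge z i j : (1 <= i)%N -> gz_dom n i j -> jl i j -> jr i j ->
  extend z i.-1 j = extend z i.-1 j.+1.
Proof.
elim: i j => // i IH j _ d hl hr.
have [eL _] := (edge_equal (ltn0Sn i) d).1 hl.
have [eR _] := (edge_equal (ltn0Sn i) d).2 hr.
case: i IH d hl hr eL eR => [|i] IH d hl hr eL eR; case/and3P: (d) => ? ? ?.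
  have d0 : gz_dom n 0 j by apply/and3P; split; lia.
  have d1 : gz_dom n 0 j.+1 by apply/and3P; split; lia.
  have e0 : a 0%N j = a 0%N j.+1 by rewrite -[a 0%N j]/(a 0.+1.-1 j) -eL eR.
  by move: (top_row d0) (top_row d1); rewrite /= e0 => -> [->].
have di : gz_dom n i.+1 j by apply/and3P; split; lia.
have di1 : gz_dom n i.+1 j.+1 by apply/and3P; split; lia.
have [hr' hl'] : jr i.+1 j /\ jl i.+1 j.+1 by apply/(double_edge_below _ di di1).
have [_ e1] := (edge_equal (ltn0Sn i) di).2 hr'.
have [_ e2] := (edge_equal (ltn0Sn i) di1).1 hl'.
rewrite /= e1 e2 hl' hr'; case: (boolP (jl i.+1 j)) => hli //.
exact: IH (ltn0Sn i) di hli hr'.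
Qed.

Lemma extend_edges z i j : (1 <= i)%N -> gz_dom n i j ->
  [/\ jl i j -> extend z i j = extend z i.-1 j,
      jr i j -> extend z i j = extend z i.-1 j.+1 &
      ~~ jl i j -> ~~ jr i j -> enc i j -> extend z i j = (a i j)%:~R].
Proof.
case: i => // i _ d; split.
- by move=> hl; have [_ e] := (edge_equal (ltn0Sn i) d).1 hl; rewrite extendS e hl.
- move=> hr; have [_ e] := (edge_equal (ltn0Sn i) d).2 hr; rewrite extendS e.
  case: (boolP (jl i.+1 j)) => [hl|]; last by rewrite hr.
  exact: extend_double_edge (ltn0Sn i) d hl hr.
- by move=> /negbTE hl /negbTE hr e; rewrite extendS e hl hr.
Qed.

Lemma extend_free z i j : free_pos i j -> extend z i j = free_coord z i j.
Proof. by case: i => [|i] /and3P[i1 _ ne] //; rewrite extendS (negbTE ne). Qed.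

Lemma continuous_extend i j : continuous (fun z : {ptws free_index -> R} => extend z i j).
Proof.
elim: i j => [|i IH] j z; first exact: cst_continuous.
rewrite /=; case: (enc i.+1 j); last first.
  rewrite /free_coord; case: insub => [p|]; first exact: continuous_coord.
  exact: cst_continuous.
case: (jl i.+1 j); first exact: IH.
by case: (jr i.+1 j); [exact: IH | exact: cst_continuous].
Qed.

Lemma extend_affine x y t i j :
  extend (fun p => x p + t * (y p - x p)) i j =
  extend x i j + t * (extend y i j - extend x i j).
Proof.
elim: i j => [|i IH] j /=; first ring.
case: ifP => _; last by rewrite /free_coord; case: insub => [p|] /=; ring.
by case: ifP => _; [|case: ifP => _]; rewrite ?IH //; ring.
Qed.

Lemma continuous_ycoord i j : continuous (fun y : {ptws Idx n -> R} => ycoord lam y i j).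
Proof.
move=> y; rewrite /ycoord; case: (i == 0%N); first exact: cst_continuous.
by case: insub => [k|]; [exact: continuous_coord | exact: cst_continuous].
Qed.

Lemma continuous_embed z : {for z, continuous embed}.
Proof. by apply: continuous_ptws => k; exact: continuous_extend. Qed.

Lemma continuous_restrict y : {for y, continuous restrict}.
Proof. by apply: continuous_ptws => p; exact: continuous_ycoord. Qed.

Lemma embedK : cancel embed restrict.
Proof.
move=> z; apply: funext => p; have /and3P[_ d _] := valP p.
by rewrite /restrict ycoord_embed // extend_free ?free_coord_val //; exact: (valP p).
Qed.

Lemma hatC_extend (y : {ptws Idx n -> R}) : hatC lam P y ->
  forall i j, gz_dom n i j -> ycoord lam y i j = extend (restrict y) i j.
Proof.
move=> hy; elim=> [//|i IH] j d; have [hl [hr [he _]]] := hy i.+1 j (ltn0Sn i) d.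
have [d0 d1] := gz_dom_up (ltn0Sn i) d.
rewrite extendS; case: (boolP (enc i.+1 j)) => e.
  case: (boolP (jl i.+1 j)) => l; first by rewrite (hl l) IH.
  case: (boolP (jr i.+1 j)) => r; first by rewrite (hr r) IH.
  exact: he.
have /(free_coordP (restrict y)) [p [-> e1 e2]] : free_pos i.+1 j by apply/and3P.
by rewrite /restrict e1 e2.
Qed.

Lemma restrictK (y : {ptws Idx n -> R}) : hatC lam P y -> embed (restrict y) = y.
Proof.
move=> hy; apply: funext => k; rewrite /embed -hatC_extend // ?ycoord_Idx //.
by case: k => [[i j]]; rewrite /idxb /= => /and3P[? ? ?]; apply/and3P; split; lia.
Qed.

Lemma egz_path_trans p q r : egz_path n P p q -> egz_path n P q r -> egz_path n P p r.
Proof. by elim=> // x y z' A _ IH /IH; apply: egz_path_step. Qed.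

Lemma egz_path_adj p q : egz_adj n P p q -> egz_path n P p q.
Proof. by move=> A; apply: (egz_path_step A); exact: egz_path_refl. Qed.

Lemma egz_adj_sym p q : egz_adj n P p q -> egz_adj n P q p.
Proof.
case=> i [j [i1 d [[h [[-> ->]|[-> ->]]]|[h [[-> ->]|[-> ->]]]]]];
  exists i, j; split => //; [left|left|right|right]; split => //; tauto.
Qed.

Lemma egz_path_sym p q : egz_path n P p q -> egz_path n P q p.
Proof.
elim=> [x|x y z' A _ IH]; first exact: egz_path_refl.
by apply: (egz_path_trans IH); apply: egz_path_adj; exact: egz_adj_sym.
Qed.

Lemma egz_path_left i j : (1 <= i)%N -> gz_dom n i j -> jl i j ->
  egz_path n P (i, j) (i.-1, j).
Proof.
by move=> i1 d h; apply: egz_path_adj; exists i, j; split => //; left; split => //; left.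
Qed.

Lemma egz_path_right i j : (1 <= i)%N -> gz_dom n i j -> jr i j ->
  egz_path n P (i, j) (i.-1, j.+1).
Proof.
by move=> i1 d h; apply: egz_path_adj; exists i, j; split => //; right; split => //; left.
Qed.

Lemma egz_path_const (T : Type) (phi : nat -> nat -> T) :
  (forall i j, (1 <= i)%N -> gz_dom n i j -> jl i j -> phi i j = phi i.-1 j) ->
  (forall i j, (1 <= i)%N -> gz_dom n i j -> jr i j -> phi i j = phi i.-1 j.+1) ->
  forall p q, egz_path n P p q -> phi p.1 p.2 = phi q.1 q.2.
Proof.
move=> hl hr p q; elim => // x y z' [i [j [i1 d]]] + _ <-.
by case=> [[/(hl _ _ i1 d) e [[-> ->]|[-> ->]]]|[/(hr _ _ i1 d) e [[-> ->]|[-> ->]]]];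
  rewrite /= e.
Qed.

Lemma extend_path z p q : egz_path n P p q -> extend z p.1 p.2 = extend z q.1 q.2.
Proof.
by apply: egz_path_const => i j i1 d; have [el er _] := extend_edges z i1 d.
Qed.

Lemma entry_path p q : egz_path n P p q -> a p.1 p.2 = a q.1 q.2.
Proof.
apply: egz_path_const => i j i1 d h.
- by have [] := (edge_equal i1 d).1 h.
- by have [] := (edge_equal i1 d).2 h.
Qed.

Lemma ycoord_affine_comb m (x : 'I_m -> {ptws Idx n -> R}) (c : 'I_m -> R)
    (y : {ptws Idx n -> R}) :
  \sum_(k < m) c k = 1 -> (forall t, y t = \sum_(k < m) c k * x k t) ->
  forall i j, ycoord lam y i j = \sum_(k < m) c k * ycoord lam (x k) i j.
Proof.
move=> c1 yE i j; rewrite /ycoord; case: (i == 0%N).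
  by rewrite -mulr_suml c1 mul1r.
case: insub => [k|]; first exact: yE.
by rewrite big1 // => k _; rewrite mulr0.
Qed.

Lemma affine_span_path (y : {ptws Idx n -> R}) p q :
  affine_span (hatC lam P) y -> egz_path n P p q ->
  ycoord lam y p.1 p.2 = ycoord lam y q.1 q.2.
Proof.
case=> m [x [c [hx c1 yE]]] pq; rewrite !(ycoord_affine_comb c1 yE).
apply: eq_bigr => k _; congr (_ * _); move: pq; apply: egz_path_const => i j i1 d.
- by have [] := hx k i j i1 d.
- by have [_ []] := hx k i j i1 d.
Qed.

(* The strict inequalities imposed on free entries in the definition of
   [hatC] (margins), and the interlacing inequalities (gaps). *)
Definition lower_margin z i j : R :=
  if (2%:Z <= a i j - a i.-1 j) then extend z i j - ((a i j)%:~R - 1 : R)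
  else extend z i j - extend z i.-1 j.
Definition upper_margin z i j : R :=
  if a i.-1 j.+1 == a i j then extend z i.-1 j.+1 - extend z i j
  else ((a i j)%:~R : R) - extend z i j.
Definition left_gap z i j : R := extend z i j - extend z i.-1 j.
Definition right_gap z i j : R := extend z i.-1 j.+1 - extend z i j.

Lemma embed_hatC z :
  (forall i j, free_pos i j -> 0 < lower_margin z i j /\ 0 < upper_margin z i j) ->
  hatC lam P (embed z).
Proof.
move=> margins i j i1 d /=; have [d0 d1] := gz_dom_up i1 d.
rewrite (ycoord_embed z d) (ycoord_embed z d0) (ycoord_embed z d1).
have [el er ee] := extend_edges z i1 d; do 3 split => //.
move=> nl nr ne; have [] := margins i j (ltac:(exact/and3P)).
by rewrite /lower_margin /upper_margin; case: ifP => _; case: ifP => _; split; lra.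
Qed.

(** * The base point *)

(* Every entry of the base point is [a i j - slack i j] with
   [0 <= slack i j < 1]; the slack of a free entry tied to its parents by
   equalities lies strictly between theirs. *)
Fixpoint slack i j {struct i} : R :=
  if i is i'.+1 then
    if enc i j then
      if jl i j then slack i' j else if jr i j then slack i' j.+1 else 0
    else if a i' j.+1 == a i j then
      if a i' j == a i j then (slack i' j + slack i' j.+1) / 2
      else (slack i' j.+1 + 1) / 2
    else 1 / 2
  else 0.

Lemma slackS i j : slack i.+1 j =
  if enc i.+1 j then
    if jl i.+1 j then slack i j else if jr i.+1 j then slack i j.+1 else 0
  else if a i j.+1 == a i.+1 j then
    if a i j == a i.+1 j then (slack i j + slack i j.+1) / 2
    else (slack i j.+1 + 1) / 2
  else 1 / 2.
Proof. by []. Qed.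

Lemma slack_bounds i j : 0 <= slack i j /\ slack i j < 1.
Proof.
elim: i j => [|i IH] j; first by split => //; exact: ltr01.
have [? ?] := IH j; have [? ?] := IH j.+1.
by rewrite slackS; do ![case: ifP => _]; split; lra.
Qed.

Definition base : {ptws free_index -> R} :=
  fun p => (a (val p).1 (val p).2)%:~R - slack (val p).1 (val p).2.

Lemma extend_base i j : gz_dom n i j -> extend base i j = (a i j)%:~R - slack i j.
Proof.
elim: i j => [|i IH] j d; first by rewrite /= top_row // subr0.
have [d0 d1] := gz_dom_up (ltn0Sn i) d.
rewrite extendS slackS; case: (boolP (enc i.+1 j)) => e.
  case: (boolP (jl i.+1 j)) => l.
    by have [-> _] := (edge_equal (ltn0Sn i) d).1 l; exact: IH.
  case: (boolP (jr i.+1 j)) => r; last by rewrite subr0.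
  by have [-> _] := (edge_equal (ltn0Sn i) d).2 r; exact: IH.
have /(free_coordP base) [p [-> e1 e2]] : free_pos i.+1 j by apply/and3P.
by rewrite /base e1 e2 slackS (negbTE e).
Qed.

Lemma slack_path p q : egz_path n P p q -> gz_dom n p.1 p.2 -> gz_dom n q.1 q.2 ->
  slack p.1 p.2 = slack q.1 q.2.
Proof.
move=> pq dp dq; have := extend_path base pq.
by rewrite !extend_base // (entry_path pq) => h; lra.
Qed.

Definition row_separated i := forall j, gz_dom n i j -> gz_dom n i j.+1 ->
  a i j = a i j.+1 -> slack i j.+1 < slack i j \/ egz_path n P (i, j) (i, j.+1).

Lemma free_slack i j : free_pos i j -> row_separated i.-1 ->
  [/\ a i.-1 j = a i j -> slack i j < slack i.-1 j,
      a i.-1 j.+1 = a i j -> slack i.-1 j.+1 < slack i j & 0 < slack i j].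
Proof.
case: i => [|i] /and3P[// _ d ne] sep; have [d0 d1] := gz_dom_up (ltn0Sn i) d.
have [le1 le2] := interlacing (ltn0Sn i) d; rewrite /= in le1 le2 d0 d1.
(* By (5) and (7), a free entry equal to its left parent also equals its right
   parent, and these are not connected. *)
have tight : a i j = a i.+1 j -> a i j.+1 = a i.+1 j /\ slack i j.+1 < slack i j.
  move=> eL; have eR : a i j.+1 = a i.+1 j.
    move: le2; rewrite le_eqVlt => /orP[/eqP -> //|lt]; rewrite -eL in lt.
    by have [e _] := left_tight_edge (ltn0Sn i) d lt (esym eL); rewrite e in ne.
  split => //; have [//|pth] := sep j d0 d1 (etrans eL (esym eR)).
  have [e _ _] := connected_double_edge (ltn0Sn i) d (etrans eL (esym eR)) (esym eL) pth.
  by rewrite e in ne.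
have [? ?] := slack_bounds i j; have [? ?] := slack_bounds i j.+1.
rewrite slackS (negbTE ne); split.
- by move=> eL; have [eR lt] := tight eL; rewrite eR eL !eqxx; lra.
- move=> eR; rewrite eR eqxx; case: ifP => [/eqP eL|_]; last by lra.
  by have [_ lt] := tight eL; lra.
- case: ifP => _; last by lra.
  case: ifP => [/eqP eL|_]; last by lra.
  by have [_ lt] := tight eL; lra.
Qed.

Lemma slack_left i j : (1 <= i)%N -> gz_dom n i j -> row_separated i.-1 ->
  a i.-1 j = a i j -> slack i j < slack i.-1 j \/ egz_path n P (i, j) (i.-1, j).
Proof.
move=> i1 d sep eL; case: (boolP (enc i j)) => e.
  case: (boolP (jl i j)) => l; first by right; exact: egz_path_left.
  have [d0 d1] := gz_dom_up i1 d; have [_ le2] := interlacing i1 d.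
  case: (boolP (jr i j)) => r.
    have [eR _] := (edge_equal i1 d).2 r.
    have slackE : slack i j = slack i.-1 j.+1.
      case: i i1 d {sep eL le2 d0 d1 eR} l r e => // i _ d l r e.
      by rewrite slackS e (negbTE l) r.
    have [lt|pth] := sep j d0 d1 (etrans eL eR); first by left; rewrite slackE.
    by right; apply: egz_path_trans (egz_path_right i1 d r) _; exact: egz_path_sym.
  exfalso; move: le2; rewrite -eL le_eqVlt => /orP[/eqP eq|lt].
    by case: (encircled_has_edge i1 d eq (esym eL) e) => h; [move: l|move: r]; rewrite h.
  by have [_ h] := left_tight_edge i1 d lt (esym eL); move: l; rewrite h.
have fij : free_pos i j by apply/and3P.
by left; have [+ _ _] := free_slack fij sep; apply.
Qed.

Lemma slack_right i j : (1 <= i)%N -> gz_dom n i j -> row_separated i.-1 ->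
  a i j = a i.-1 j.+1 -> slack i.-1 j.+1 < slack i j \/ egz_path n P (i, j) (i.-1, j.+1).
Proof.
move=> i1 d sep eR; case: (boolP (enc i j)) => e.
  have [d0 d1] := gz_dom_up i1 d; have [le1 _] := interlacing i1 d.
  case: (boolP (jl i j)) => l.
    have [eL _] := (edge_equal i1 d).1 l.
    have slackE : slack i j = slack i.-1 j.
      by case: i i1 d {sep eR le1 d0 d1 eL} l e => // i _ d l e; rewrite slackS e l.
    have [lt|pth] := sep j d0 d1 (etrans (esym eL) eR); first by left; rewrite slackE.
    by right; apply: egz_path_trans (egz_path_left i1 d l) pth.
  case: (boolP (jr i j)) => r; first by right; exact: egz_path_right.
  exfalso; move: le1; rewrite eR le_eqVlt => /orP[/eqP eq|lt].
    have := encircled_has_edge i1 d eq (etrans eR (esym eq)) e.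
    by case=> h; [move: l|move: r]; rewrite h.
  by move: r; rewrite (right_tight_edge i1 d lt eR e).
have fij : free_pos i j by apply/and3P.
by left; have [_ + _] := free_slack fij sep; apply; rewrite eR.
Qed.

Lemma row_separatedP i : row_separated i.
Proof.
elim: i => [|i IH] j d dj e.
  right; have [_ l r] := equal_top_double_edge d dj e.
  have d1 : gz_dom n 1 j.
    by case/and3P: d => ? ? ?; case/and3P: dj => ? ? ?; apply/and3P; split; lia.
  apply: egz_path_trans (egz_path_right (ltn0Sn 0) d1 r).
  exact: egz_path_sym (egz_path_left (ltn0Sn 0) d1 l).
have [d0 d1] := gz_dom_up (ltn0Sn i) d.
have [_ le2] := interlacing (ltn0Sn i) d; have [le3 _] := interlacing (ltn0Sn i) dj.
rewrite /= in d0 d1 le2 le3.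
have eR : a i.+1 j = a i j.+1 by apply/eqP; rewrite eq_le le2 e le3.
have eR' : a i j.+1 = a i.+1 j.+1 by rewrite -e.
have [A|A] := slack_right (ltn0Sn i) d IH eR;
  have [B|B] := slack_left (ltn0Sn i) dj IH eR'.
- by left; lra.
- by have := slack_path B dj d1; left; lra.
- by have := slack_path A d d1; left; lra.
- by right; apply: egz_path_trans A _; exact: egz_path_sym.
Qed.

Lemma base_gaps i j : (1 <= i)%N -> gz_dom n i j ->
  (0 < left_gap base i j \/ egz_path n P (i, j) (i.-1, j)) /\
  (0 < right_gap base i j \/ egz_path n P (i, j) (i.-1, j.+1)).
Proof.
move=> i1 d; have [d0 d1] := gz_dom_up i1 d; have [le1 le2] := interlacing i1 d.
have [? ?] := slack_bounds i j; have [? ?] := slack_bounds i.-1 j.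
have [? ?] := slack_bounds i.-1 j.+1.
rewrite /left_gap /right_gap !extend_base //; split.
  move: le1; rewrite le_eqVlt => /orP[/eqP eL|/(intr_ltD1 R) ?]; last by left; lra.
  have [?|] := slack_left i1 d (@row_separatedP i.-1) eL; last by right.
  by left; rewrite eL; lra.
move: le2; rewrite le_eqVlt => /orP[/eqP eR|/(intr_ltD1 R) ?]; last by left; lra.
have [?|] := slack_right i1 d (@row_separatedP i.-1) eR; last by right.
by left; rewrite eR; lra.
Qed.

Lemma base_margins i j : free_pos i j ->
  0 < lower_margin base i j /\ 0 < upper_margin base i j.
Proof.
move=> /[dup] fij /and3P[i1 d _]; have [d0 d1] := gz_dom_up i1 d.
have [le1 _] := interlacing i1 d.
have [? ?] := slack_bounds i j; have [? ?] := slack_bounds i.-1 j.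
have [? ?] := slack_bounds i.-1 j.+1.
have [sL sR s0] := free_slack fij (@row_separatedP i.-1).
rewrite /lower_margin /upper_margin !extend_base //; split.
  case: ifP => _; first by lra.
  move: le1; rewrite le_eqVlt => /orP[/eqP eL|/(intr_ltD1 R) ?]; last by lra.
  by have := sL eL; rewrite eL; lra.
case: ifP => [/eqP eR|_]; last by lra.
by have := sR eR; rewrite eR; lra.
Qed.

(** * The cell over an open polyhedron *)

Definition constraint_index := (('I_n.+1 * 'I_n.+1) * (bool * bool))%type.

(* [((i, j), (true, low))] is a margin of a free entry and [((i, j), (false, low))]
   a gap that is strict at the base point; every other index gives [1]. *)
Definition constraint (k : constraint_index) (z : {ptws free_index -> R}) : R :=
  let: ((i, j), (margin, low)) := k in
  if margin then
    if free_pos i j then (if low then lower_margin else upper_margin) z i j else 1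
  else if (1 <= i)%N && gz_dom n i j then
    let gap := if low then left_gap else right_gap in
    if 0 < gap base i j then gap z i j else 1
  else 1.

Lemma continuous_margins_gaps i j (z : {ptws free_index -> R}) :
  [/\ {for z, continuous (fun z => lower_margin z i j)},
      {for z, continuous (fun z => upper_margin z i j)},
      {for z, continuous (fun z => left_gap z i j)} &
      {for z, continuous (fun z => right_gap z i j)}].
Proof.
rewrite /lower_margin /upper_margin /left_gap /right_gap.
split; [case: (2%:Z <= _) | case: (_ == _) | idtac | idtac];
  apply: continuous_sub; exact: continuous_extend || exact: cst_continuous.
Qed.

Lemma continuous_constraint k : continuous (constraint k).
Proof.
move=> z; case: k => [[i j] [[] low]]; rewrite /constraint /=.
  have [? ? _ _] := continuous_margins_gaps i j z.
  by case: (free_pos i j); case: low => //; exact: cst_continuous.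
have [_ _ ? ?] := continuous_margins_gaps i j z.
case: (_ && _); last exact: cst_continuous.
by case: low => /=; case: (0 < _) => //; exact: cst_continuous.
Qed.

Lemma constraint_affine k x y t :
  constraint k (fun p => x p + t * (y p - x p)) =
  constraint k x + t * (constraint k y - constraint k x).
Proof.
case: k => [[i j] [[] []]] /=; do ![case: ifP => _];
  rewrite ?/lower_margin ?/upper_margin ?/left_gap ?/right_gap;
  do ?[case: ifP => _]; rewrite ?extend_affine; ring.
Qed.

Local Notation free_polyhedron := (open_polyhedron constraint).

Lemma base_in_polyhedron : free_polyhedron base.
Proof.
case=> [[i j] [[] []]] /=; do ![case: ifP] => //;
  by [move/base_margins => [] | rewrite ltr01].
Qed.

Lemma polyhedron_margins z : free_polyhedron z -> forall i j, free_pos i j ->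
  0 < lower_margin z i j /\ 0 < upper_margin z i j.
Proof.
move=> Sz i j /[dup] fij /and3P[_ d _]; have [i' [j' [ei ej]]] := gz_dom_ord d.
have := Sz ((i', j'), (true, true)); have := Sz ((i', j'), (true, false)).
by rewrite /constraint /= ei ej fij.
Qed.

Lemma polyhedron_gaps z : free_polyhedron z -> forall i j, (1 <= i)%N -> gz_dom n i j ->
  (0 < left_gap base i j -> 0 < left_gap z i j) /\
  (0 < right_gap base i j -> 0 < right_gap z i j).
Proof.
move=> Sz i j i1 d; have [i' [j' [ei ej]]] := gz_dom_ord d.
have := Sz ((i', j'), (false, true)); have := Sz ((i', j'), (false, false)).
rewrite /constraint /= ei ej i1 d /= => hr hl.
by split => g; [move: hl|move: hr]; rewrite g.
Qed.

Definition strict_gap (k : ('I_n.+1 * 'I_n.+1) * bool) : bool :=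
  let: ((i, j), low) := k in
  [&& (1 <= i)%N, gz_dom n i j & 0 < (if low then left_gap else right_gap) base i j].

Definition gap_lo (k : ('I_n.+1 * 'I_n.+1) * bool) (w : {ptws Idx n -> R}) : R :=
  let: ((i, j), low) := k in
  if low then ycoord lam w i.-1 j else ycoord lam w i j.

Definition gap_hi (k : ('I_n.+1 * 'I_n.+1) * bool) (w : {ptws Idx n -> R}) : R :=
  let: ((i, j), low) := k in
  if low then ycoord lam w i j else ycoord lam w i.-1 j.+1.

Definition strict_gaps : set {ptws Idx n -> R} :=
  [set w | forall k, strict_gap k -> gap_lo k w < gap_hi k w].

Lemma open_strict_gaps : open strict_gaps.
Proof.
by apply: open_strict_ineqs => -[[i j] []]; exact: continuous_ycoord.
Qed.

Lemma strict_gaps_GZpoly w :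
  strict_gaps w -> affine_span (hatC lam P) w -> GZpoly lam w.
Proof.
move=> sw Lw i j i1 j1 hij; have d : gz_dom n i j by apply/and3P; split; lia.
have [i' [j' [ei ej]]] := gz_dom_ord d.
have strict low : 0 < (if low then left_gap else right_gap) base i j ->
    gap_lo ((i', j'), low) w < gap_hi ((i', j'), low) w.
  by move=> g; apply: sw; rewrite /strict_gap ei ej i1 d.
have [g1 g2] := base_gaps i1 d; split.
- case: g1 => [/(strict true)|/(affine_span_path Lw) /= -> //].
  by rewrite /= ei ej => /ltW.
- case: g2 => [/(strict false)|/(affine_span_path Lw) /= -> //].
  by rewrite /= ei ej => /ltW.
Qed.

Lemma embed_strict_gaps z : free_polyhedron z -> strict_gaps (embed z).
Proof.
move=> Sz [[i j] low] /and3P[i1 d g]; have [d0 d1] := gz_dom_up i1 d.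
have [gl gr] := polyhedron_gaps Sz i1 d.
rewrite /gap_lo /gap_hi (ycoord_embed z d) (ycoord_embed z d0) (ycoord_embed z d1).
by case: low g => [/gl|/gr]; rewrite /left_gap /right_gap subr_gt0.
Qed.

Lemma embed_cell z : free_polyhedron z -> cell lam P (embed z).
Proof.
move=> Sz; have hE := embed_hatC (polyhedron_margins Sz).
have LE := affine_span_self hE; have sE := embed_strict_gaps Sz.
split => //; split; first by split => //; exact: strict_gaps_GZpoly.
exists strict_gaps; split => //; first exact: open_strict_gaps.
by move=> w [sw Lw]; split => //; exact: strict_gaps_GZpoly.
Qed.

Lemma ycoord_line (y x : {ptws Idx n -> R}) (t : R) i j :
  ycoord lam (fun k => (1 + t) * y k - t * x k) i j =
  (1 + t) * ycoord lam y i j - t * ycoord lam x i j.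
Proof.
by rewrite /ycoord; case: (i == 0%N) => /=; [ring | case: insub => [k|] //=; ring].
Qed.

Lemma cell_gap (y : {ptws Idx n -> R}) (p q : nat * nat) : cell lam P y ->
  (forall w : {ptws Idx n -> R}, GZpoly lam w ->
     ycoord lam w p.1 p.2 <= ycoord lam w q.1 q.2) ->
  ycoord lam (embed base) p.1 p.2 < ycoord lam (embed base) q.1 q.2 ->
  ycoord lam y p.1 p.2 < ycoord lam y q.1 q.2.
Proof.
move=> [hy relint] GZle base_lt; rewrite -subr_lt0.
have hx := embed_hatC base_margins.
apply: (rel_interior_affine_span_lt
  (phi := fun w => ycoord lam w p.1 p.2 - ycoord lam w q.1 q.2) _ _ hx hy _ relint).
- by move=> u v t; rewrite !ycoord_line; ring.
- by move=> w /GZle; rewrite subr_le0.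
- by rewrite subr_lt0.
Qed.

Lemma hatC_margins y : hatC lam P y -> forall i j, free_pos i j ->
  0 < lower_margin (restrict y) i j /\ 0 < upper_margin (restrict y) i j.
Proof.
move=> hy i j /and3P[i1 d ne]; have [d0 d1] := gz_dom_up i1 d.
have nl : ~~ jl i j by apply/negP => /((edge_equal i1 d).1) [_ e]; rewrite e in ne.
have nr : ~~ jr i j by apply/negP => /((edge_equal i1 d).2) [_ e]; rewrite e in ne.
have [_ [_ [_ /(_ nl nr ne) [lo hi]]]] := hy i j i1 d.
rewrite /lower_margin /upper_margin -!(hatC_extend hy) //.
by move: lo hi; do 2![case: ifP => _]; split; lra.
Qed.

Lemma cell_gaps y : cell lam P y -> forall i j, (1 <= i)%N -> gz_dom n i j ->
  (0 < left_gap base i j -> 0 < left_gap (restrict y) i j) /\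
  (0 < right_gap base i j -> 0 < right_gap (restrict y) i j).
Proof.
move=> /[dup] cy [hy _] i j i1 d; have [d0 d1] := gz_dom_up i1 d.
have GZle (w : {ptws Idx n -> R}) : GZpoly lam w ->
    ycoord lam w i.-1 j <= ycoord lam w i j /\ ycoord lam w i j <= ycoord lam w i.-1 j.+1.
  by case/and3P: d => ? ? ?; apply; lia.
rewrite /left_gap /right_gap -!(hatC_extend hy) // !subr_gt0.
rewrite -(ycoord_embed base d) -(ycoord_embed base d0) -(ycoord_embed base d1).
split => g.
- by apply: (cell_gap (p := (i.-1, j)) (q := (i, j)) cy _ g) => w /GZle [].
- by apply: (cell_gap (p := (i, j)) (q := (i.-1, j.+1)) cy _ g) => w /GZle [].
Qed.

Lemma restrict_cell y : cell lam P y -> free_polyhedron (restrict y).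
Proof.
move=> cy [[i j] [[] low]] /=.
  case: ifP => [fij|_]; last exact: ltr01.
  by have [] := hatC_margins cy.1 fij; case: low.
case: ifP => [/andP[i1 d]|_]; last exact: ltr01.
have [gl gr] := cell_gaps cy i1 d.
by case: low => /=; case: ifP => [g|_];
  [exact: gl g | exact: ltr01 | exact: gr g | exact: ltr01].
Qed.

Lemma cell_homeomorphic_polyhedron :
  ambient_homeomorphic (@cell R n lam P) free_polyhedron.
Proof.
exists restrict, embed; split.
- exact: restrict_cell.
- exact: embed_cell.
- by move=> y [hy _]; exact: restrictK.
- by move=> z _; exact: embedK.
- by split => [y _|z _]; [exact: continuous_restrict | exact: continuous_embed].
Qed.

Lemma row_free_count i : (i < n)%N ->
  (\sum_(j < n.+1) free_pos i j = \sum_(1 <= j < (n - i).+1) ~~ enc i j)%N.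
Proof.
move=> lt_in; rewrite -(big_mkord xpredT (fun j => (free_pos i j : nat))).
rewrite (@big_cat_nat _ _ _ 1) //= big_nat1.
have -> : free_pos i 0 = false by apply/negP => /and3P[_ /and3P[_ h _] _].
rewrite add0n (@big_cat_nat _ _ _ (n - i).+1) //=; last by lia.
rewrite [X in (_ + X)%N]big1_seq ?addn0; last first.
  move=> j /andP[_]; rewrite mem_index_iota => hj.
  by apply/eqP; rewrite eqb0; apply/negP => /and3P[_ /and3P[_ _ h] _]; lia.
apply: eq_big_nat => j hj; have dj : gz_dom n i j by apply/and3P; split; lia.
by case: i lt_in dj {hj} => [|i] _ dj; rewrite /free_pos dj // top_row_encircled.
Qed.

Lemma card_free_index : #|{: free_index}| = egz_rank n P.
Proof.
rewrite card_sig.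
have -> : #|[pred x : 'I_n.+1 * 'I_n.+1 | free_pos x.1 x.2]| =
          (\sum_(i < n.+1) \sum_(j < n.+1) free_pos i j)%N.
  rewrite -sum1_card big_mkcond /= pair_bigA /=.
  by apply: eq_bigr => -[i j] _; rewrite inE.
rewrite big_ord_recr /= [X in (_ + X)%N]big1 ?addn0; last first.
  by move=> j _; rewrite /free_pos /gz_dom ltnn !andbF.
by apply: eq_bigr => i _; exact: row_free_count.
Qed.

End EnhancedPattern.

Unset Implicit Arguments.

Theorem lemma5p2 (R : realType) (n : nat) (lam : nat -> nat) (P : egz_data) :
  is_partition n lam -> is_enhanced_GZ n lam P ->
  (exists y, @cell R n lam P y) /\
  homeomorphic (@cell R n lam P) (@open_ball R (egz_rank n P)).
Proof.
move=> _ HP; split.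
  by exists (embed lam (@base R n P)); exact: (embed_cell HP (base_in_polyhedron HP)).
rewrite -(card_free_index HP); apply: ambient_homeomorphicW.
apply: ambient_homeomorphic_trans (cell_homeomorphic_polyhedron HP) _.
apply: ambient_homeomorphic_trans (open_polyhedron_homeomorphic_ptws
  (@continuous_constraint R n lam P) (@constraint_affine R n lam P)
  (base_in_polyhedron HP)) _.
apply: ambient_homeomorphic_trans (ptws_homeomorphic_unit_ball _) _.
exact: unit_ball_homeomorphic_open_ball.
Qed.
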